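(* A $C^1$-diffeomorphism $\mathbf f:\mathcal Z\to\mathcal X$ ($\mathcal Z=\mathbb R^{d_z}$, $\mathcal X=\mathbf f(\mathcal Z)\subseteq\mathbb R^{d_x}$) is compositional and irreducible if and only if $\mathbf f$ has at most $0$-th order interaction across slots and satisfies interaction asymmetry of order $0$ for all equivalent generators.
   Context: Fix a partition $\{B_1,\dots,B_K\}$ of $[d_z]$ into nonempty slots; $\mathbf z_S=(z_i)_{i\in S}$; $\odot$ is entrywise product. For $S\subseteq[d_z]$, $I_S(\mathbf z):=\{l\in[d_x]: (D_i f_l(\mathbf z))_{i\in S}\ne\mathbf 0\}$; write $I_k:=I_{B_k}$. For $T\subseteq[d_x]$, $D\mathbf f_T(\mathbf z)$ is the $|T|\times d_z$ Jacobian of $(f_l)_{l\in T}$. Compositionality: for all $\mathbf z$ and all $k\ne j$, $I_k(\mathbf z)\cap I_j(\mathbf z)=\emptyset$. Irreducibility: for all $\mathbf z$, $k\in[K]$ and every partition $I_k(\mathbf z)=S_1\cup S_2$ into disjoint nonempty sets, $\mathrm{rank}(D\mathbf f_{S_1}(\mathbf z))+\mathrm{rank}(D\mathbf f_{S_2}(\mathbf z))>\mathrm{rank}(D\mathbf f_{I_k(\mathbf z)}(\mathbf z))$. At most $0$-th order interaction between $\mathbf z_A,\mathbf z_B$ (nonempty $A,B\subseteq[d_z]$): $D_i\mathbf f(\mathbf z)\odot D_j\mathbf f(\mathbf z)=\mathbf 0$ for all $\mathbf z$, $i\in A$, $j\in B$; if this fails at some $\mathbf z$ (for some $i\in A,j\in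 B$), $\mathbf z_A,\mathbf z_B$ have first-order interaction at $\mathbf z$. $\mathbf f$ has at most $0$-th order interaction across slots if all pairs of distinct slots do. Interaction asymmetry of order $0$: (i) $\mathbf f$ has at most $0$-th order interaction across slots; (ii) for every $\mathbf z$, every $k$, and all nonempty $A,B$ with $A\cup B=B_k$, $\mathbf z_A,\mathbf z_B$ have first-order interaction within $\mathbf f$ at $\mathbf z$. Equivalent generator: $\bar{\mathbf f}:\mathbb R^{d_z}\to\mathbb R^{d_x}$ with $\bar{\mathbf f}(\mathbf M_1\mathbf z_{B_1},\dots,\mathbf M_K\mathbf z_{B_K})=\mathbf f(\mathbf z)$ for all $\mathbf z$, for some invertible $\mathbf M_k\in\mathbb R^{|B_k|\times|B_k|}$; ''for all equivalent generators'' means every such $\bar{\mathbf f}$ satisfies the property. *)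

From HB Require Import structures.
From mathcomp Require Import all_boot all_order all_algebra.
From mathcomp Require Import all_classical all_reals all_analysis.
Set Implicit Arguments. Unset Strict Implicit. Unset Printing Implicit Defensive.
Import Order.TTheory GRing.Theory Num.Theory.
Import numFieldNormedType.Exports.

Local Open Scope classical_set_scope.
Local Open Scope ring_scope.

Section Defs.
Variables (R : realType) (dz dx K : nat).
Variable B : 'I_dz -> 'I_K.

Definition slot (k : 'I_K) : {set 'I_dz} := [set i | B i == k].

Definition slots_nonempty : Prop := forall k : 'I_K, (0 < #|slot k|)%N.

Definition ebasis (i : 'I_dz) : 'rV[R]_dz := delta_mx 0 i.

Definition pder (f : 'rV[R]_dz -> 'rV[R]_dx) (i : 'I_dz) (l : 'I_dx)
  (z : 'rV[R]_dz) : R := ('D_(ebasis i) f z) 0 l.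

Definition jac (f : 'rV[R]_dz -> 'rV[R]_dx) (z : 'rV[R]_dz) : 'M[R]_(dx, dz) :=
  \matrix_(l < dx, i < dz) pder f i l z.

Definition jacT (f : 'rV[R]_dz -> 'rV[R]_dx) (T : {set 'I_dx})
  (z : 'rV[R]_dz) : 'M[R]_(#|T|, dz) :=
  \matrix_(k < #|T|, i < dz) pder f i (enum_val k) z.

(* C^1 diffeomorphism from R^dz onto its image f(R^dz) in R^dx
   (C^1 embedding: C^1, immersive, homeomorphism onto its image) *)
Definition C1_diffeo_onto_image (f : 'rV[R]_dz -> 'rV[R]_dx) : Prop :=
  [/\ forall z, differentiable f z,
      forall i l, continuous (pder f i l),
      forall z, \rank (jac f z) = dz &
      exists g : 'rV[R]_dx -> 'rV[R]_dz,
        (forall z, g (f z) = z) /\ {within (range f), continuous g}].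

Definition Iset (f : 'rV[R]_dz -> 'rV[R]_dx) (S : {set 'I_dz})
  (z : 'rV[R]_dz) : {set 'I_dx} :=
  [set l | [exists i in S, pder f i l z != 0]].

Definition compositional (f : 'rV[R]_dz -> 'rV[R]_dx) : Prop :=
  forall z (k j : 'I_K), k != j ->
    Iset f (slot k) z :&: Iset f (slot j) z = finset.set0.

Definition irreducible (f : 'rV[R]_dz -> 'rV[R]_dx) : Prop :=
  forall z (k : 'I_K) (S1 S2 : {set 'I_dx}),
    (0 < #|S1|)%N -> (0 < #|S2|)%N -> S1 :&: S2 = finset.set0 ->
    S1 :|: S2 = Iset f (slot k) z ->
    (\rank (jacT f S1 z) + \rank (jacT f S2 z) > \rank (jacT f (Iset f (slot k) z) z))%N.

Definition atmost0 (f : 'rV[R]_dz -> 'rV[R]_dx) (A C : {set 'I_dz}) : Prop :=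
  forall z i j, i \in A -> j \in C ->
    forall l, pder f i l z * pder f j l z = 0.

Definition first_order_at (f : 'rV[R]_dz -> 'rV[R]_dx) (A C : {set 'I_dz})
  (z : 'rV[R]_dz) : Prop :=
  exists i j l, [/\ i \in A, j \in C & pder f i l z * pder f j l z != 0].

Definition atmost0_across_slots (f : 'rV[R]_dz -> 'rV[R]_dx) : Prop :=
  forall k j : 'I_K, k != j -> atmost0 f (slot k) (slot j).

Definition interaction_asymmetry0 (f : 'rV[R]_dz -> 'rV[R]_dx) : Prop :=
  atmost0_across_slots f /\
  forall z (k : 'I_K) (A C : {set 'I_dz}),
    (0 < #|A|)%N -> (0 < #|C|)%N -> A :|: C = slot k -> first_order_at f A C z.

(* block-diagonal invertible matrix w.r.t. the slot partition:
   equivalently, one invertible |B_k| x |B_k| block M_k per slot *)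
Definition slot_blockdiag_inv (M : 'M[R]_dz) : Prop :=
  M \in unitmx /\ forall i j, B i != B j -> M i j = 0.

(* fbar (M_1 z_{B_1}, ..., M_K z_{B_K}) = f z for all z *)
Definition equivalent_generator (f fbar : 'rV[R]_dz -> 'rV[R]_dx) : Prop :=
  exists M : 'M[R]_dz, slot_blockdiag_inv M /\
    forall z : 'rV[R]_dz, fbar (z *m M^T) = f z.

End Defs.

(* Everything happens at the Jacobian J = Df(z), which has full column rank; an
   equivalent generator has Jacobian J Q with Q = M^-1 invertible and block diagonal
   with respect to the slots.  Right multiplication by such a Q preserves the row
   supports I_k and the ranks of row blocks, so compositionality and irreducibility
   pass to every equivalent generator, and compositionality is literally the absence
   of interaction across slots.
   If a split B_k = A u C had no interaction, the outputs depending on z_A and those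
   depending on z_C would split I_k into two blocks whose Jacobians live on the
   disjoint coordinates A and C, so their ranks would add up.
   Conversely, if I_k = S_1 u S_2 with rank Df_S1 + rank Df_S2 <= rank Df_Ik <= |B_k|,
   a change of coordinates inside slot k sending bases of the two row spaces to the
   coordinate rows of complementary sets A, C gives an equivalent generator (it is
   invertible because J has full column rank) in which S_1 depends only on z_A and
   S_2 only on z_C, so z_A and z_C do not interact. *)

From HB Require Import structures.
From mathcomp Require Import all_boot all_order all_algebra.
From mathcomp Require Import all_classical all_reals all_analysis.
Set Implicit Arguments. Unset Strict Implicit. Unset Printing Implicit Defensive.
Import Order.TTheory GRing.Theory Num.Theory.
Import numFieldNormedType.Exports.
Local Open Scope ring_scope.

Section CoordinateProjection.
Variables (F : fieldType) (n : nat).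
Implicit Types A C : {set 'I_n}.

(* [X *m coordmx A = X] says that the rows of X are supported on A. *)
Definition coordmx A : 'M[F]_n := diag_mx (\row_i (i \in A)%:R).

Lemma mul_mx_coordmx m (X : 'M[F]_(m, n)) A t j :
  (X *m coordmx A) t j = (j \in A)%:R * X t j.
Proof. by rewrite mul_mx_diag !mxE mulrC. Qed.

Lemma row_coordmx_mul m A (X : 'M[F]_(n, m)) i :
  row i (coordmx A *m X) = (i \in A)%:R *: row i X.
Proof. by apply/rowP => j; rewrite mul_diag_mx !mxE. Qed.

Lemma row_coordmx A i : row i (coordmx A) = (i \in A)%:R *: delta_mx 0 i.
Proof. by rewrite row_diag_mx mxE. Qed.

Lemma coordmxM A C : coordmx A *m coordmx C = coordmx (A :&: C).
Proof.
apply/row_matrixP => i; rewrite row_coordmx_mul !row_coordmx scalerA -natrM.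
by rewrite inE mulnb.
Qed.

Lemma coordmx0 : coordmx finset.set0 = 0.
Proof. by apply/matrixP => i j; rewrite !mxE inE mul0rn. Qed.

Lemma coord_support m (X : 'M[F]_(m, n)) A :
  X *m coordmx A = X <-> forall t j, j \notin A -> X t j = 0.
Proof.
split=> [XA t j jA | X0].
  by rewrite -XA mul_mx_coordmx (negbTE jA) mul0r.
apply/matrixP => t j; rewrite mul_mx_coordmx.
by case: (boolP (j \in A)) => [_|/X0 ->]; rewrite ?mul1r ?mulr0.
Qed.

Lemma coord_support_sub m1 m2 (X : 'M[F]_(m1, n)) (Y : 'M[F]_(m2, n)) A :
  (X <= Y)%MS -> Y *m coordmx A = Y -> X *m coordmx A = X.
Proof. by move=> /submxP[D ->] YA; rewrite -mulmxA YA. Qed.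

Lemma mxrank_coordmx A : (\rank (coordmx A) <= #|A|)%N.
Proof.
rewrite /coordmx diag_mx_sum_delta -sum1_card [X in (_ <= X)%N]big_mkcond /=.
apply: (big_ind2 (fun (M : 'M[F]_n) k => \rank M <= k)%N) => [|M1 n1 M2 n2 le1 le2|i _].
- by rewrite mxrank0.
- exact: leq_trans (mxrank_add _ _) (leq_add le1 le2).
rewrite mxE; case: (i \in A); last by rewrite scale0r mxrank0.
by rewrite scale1r mxrank_delta.
Qed.

Lemma mxrank_coord_support m (X : 'M[F]_(m, n)) A :
  X *m coordmx A = X -> (\rank X <= #|A|)%N.
Proof. by move=> <-; exact: leq_trans (mxrankM_maxr _ _) (mxrank_coordmx A). Qed.

Lemma capmx_coord_support m1 m2 (X1 : 'M[F]_(m1, n)) (X2 : 'M[F]_(m2, n)) A C :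
  X1 *m coordmx A = X1 -> X2 *m coordmx C = X2 -> A :&: C = finset.set0 ->
  (X1 :&: X2 = 0)%MS.
Proof.
move=> X1A X2C AC; set V := (X1 :&: X2)%MS.
have VA : V *m coordmx A = V by apply: coord_support_sub X1A; exact: capmxSl.
have VC : V *m coordmx C = V by apply: coord_support_sub X2C; exact: capmxSr.
by rewrite -VA -VC -mulmxA coordmxM finset.setIC AC coordmx0 mulmx0.
Qed.

Lemma full_rank_col_neq0 m (X : 'M[F]_(m, n)) i :
  \rank X = n -> exists l, X l i != 0.
Proof.
move=> rk; apply/not_existsP => col0.
have : X *m coordmx [set~ i] = X.
  apply/coord_support => t j; rewrite !inE negbK => /eqP ->.
  by apply/eqP/negP => /negP /col0.
move/mxrank_coord_support; rewrite rk cardsC1 card_ord.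
by rewrite leqNgt ltn_predL (leq_ltn_trans (leq0n i) (ltn_ord i)).
Qed.

Lemma mulmx_invmx_coord_eq0 m (X : 'M[F]_(m, n)) (P : 'M[F]_n) A l v :
  P \in unitmx -> (row l X <= coordmx A *m P)%MS -> v \notin A ->
  (X *m invmx P) l v = 0.
Proof.
move=> uP /submxP[D XlA] vA.
have rowXP : row l (X *m invmx P) = D *m coordmx A.
  by rewrite row_mul XlA mulmxA mulmxK.
move/rowP/(_ v): rowXP; rewrite mul_mx_coordmx (negbTE vA) mul0r.
by rewrite mxE.
Qed.

End CoordinateProjection.

Section SlotMatrices.
Variables (F : fieldType) (dz dx K : nat) (B : 'I_dz -> 'I_K).
Implicit Types (J : 'M[F]_(dx, dz)) (P Q : 'M[F]_dz).
Implicit Types (k : 'I_K) (A C S : {set 'I_dz}) (T : {set 'I_dx}).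

(* [slot_blockdiag_inv B Q] is [Q \in unitmx /\ slot_blockdiag Q]. *)
Definition slot_blockdiag Q := forall i j, B i != B j -> Q i j = 0.

Definition supp_rows J S : {set 'I_dx} := [set l | [exists i in S, J l i != 0]].

Definition rows_of J T : 'M[F]_(#|T|, dz) := rowsub (@enum_val _ (mem T)) J.

(* The predicates of the statement, read at a single Jacobian J = Df(z). *)
Definition mx_compositional J := forall k j, k != j ->
  supp_rows J (slot B k) :&: supp_rows J (slot B j) = finset.set0.

Definition mx_irreducible J := forall k (S1 S2 : {set 'I_dx}),
  (0 < #|S1|)%N -> (0 < #|S2|)%N -> S1 :&: S2 = finset.set0 ->
  S1 :|: S2 = supp_rows J (slot B k) ->
  (\rank (rows_of J S1) + \rank (rows_of J S2) >
   \rank (rows_of J (supp_rows J (slot B k))))%N.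

Definition mx_atmost0 J := forall k j, k != j -> forall i j',
  i \in slot B k -> j' \in slot B j -> forall l, J l i * J l j' = 0.

Definition mx_interacting J := forall k A C,
  (0 < #|A|)%N -> (0 < #|C|)%N -> A :|: C = slot B k ->
  exists i j l, [/\ i \in A, j \in C & J l i * J l j != 0].

Lemma in_slot i k : (i \in slot B k) = (B i == k).
Proof. by rewrite inE. Qed.

Lemma slot_blockdiag_coordmxC Q :
  slot_blockdiag Q <-> forall k, coordmx F (slot B k) *m Q = Q *m coordmx F (slot B k).
Proof.
split=> [Qbd k | QC i j Bij].
  apply/matrixP => i j; rewrite mul_mx_coordmx mul_diag_mx !mxE !in_slot.
  by case: (eqVneq (B i) (B j)) => [->|/Qbd->]; rewrite 1?mulrC // mulr0 mul0r.
move/matrixP/(_ i j): (QC (B i)).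
by rewrite mul_mx_coordmx mul_diag_mx !mxE !in_slot eqxx eq_sym (negbTE Bij) mul1r mul0r.
Qed.

Lemma slot_blockdiag_invmx Q :
  Q \in unitmx -> slot_blockdiag Q -> slot_blockdiag (invmx Q).
Proof.
move=> uQ /slot_blockdiag_coordmxC QC; apply/slot_blockdiag_coordmxC => k.
by rewrite -[LHS]mul1mx -(mulVmx uQ) -mulmxA (mulmxA Q) -QC mulmxK.
Qed.

Lemma supp_rowsE J S l : (l \in supp_rows J S) = (row l J *m coordmx F S != 0).
Proof.
rewrite inE -[LHS]negbK; congr (~~ _); apply/existsPn/eqP => [none | /rowP zero i].
  apply/rowP => j; rewrite mul_mx_coordmx !mxE.
  case: (boolP (j \in S)) => jS; last by rewrite mul0r.
  by move: (none j); rewrite jS negbK mul1r => /eqP.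
apply/negP => /andP[iS]; move: (zero i).
by rewrite mul_mx_coordmx iS mul1r !mxE => ->; rewrite eqxx.
Qed.

Lemma notin_supp_rows J S l j : l \notin supp_rows J S -> j \in S -> J l j = 0.
Proof.
move=> lS jS; apply/eqP/negPn/negP => nz; apply: (negP lS).
by rewrite inE; apply/existsP; exists j; rewrite jS.
Qed.

Lemma supp_rowsU J A C : supp_rows J (A :|: C) = supp_rows J A :|: supp_rows J C.
Proof.
apply/setP => l; rewrite !inE; apply/existsP/orP => [[i]|[]/existsP[i /andP[iX Jli]]].
  by rewrite inE => /andP[/orP[] iX Jli]; [left|right];
    apply/existsP; exists i; rewrite iX.
- by exists i; rewrite inE iX.
- by exists i; rewrite inE iX orbT.
Qed.

Lemma supp_rows_blockdiag J Q k : Q \in unitmx -> slot_blockdiag Q ->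
  supp_rows (J *m Q) (slot B k) = supp_rows J (slot B k).
Proof.
move=> uQ /slot_blockdiag_coordmxC QC; apply/setP => l.
by rewrite !supp_rowsE row_mul -mulmxA -QC mulmxA mulmx_free_eq0 ?row_free_unit.
Qed.

Lemma rows_of_mul J Q T : rows_of (J *m Q) T = rows_of J T *m Q.
Proof. by rewrite /rows_of mul_rowsub_mx. Qed.

Lemma row_rows_of_sub J T l : l \in T -> (row l J <= rows_of J T)%MS.
Proof.
move=> lT; apply/(eq_row_sub (enum_rank_in lT l)).
by rewrite row_rowsub enum_rankK_in.
Qed.

Lemma rows_of_subset J T T' : T \subset T' -> (rows_of J T <= rows_of J T')%MS.
Proof.
move=> TT'; apply/row_subP => t; rewrite row_rowsub.
by apply: row_rows_of_sub; apply: (fintype.subsetP TT'); exact: enum_valP.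
Qed.

Lemma rank_rows_of_gt0 J T S l :
  l \in T -> l \in supp_rows J S -> (0 < \rank (rows_of J T))%N.
Proof.
move=> lT; rewrite supp_rowsE => nz.
have /mxrankS : (row l J <= rows_of J T)%MS by exact: row_rows_of_sub.
by apply: leq_trans; rewrite rank_rV lt0b; apply: contraNneq nz => ->; rewrite mul0mx.
Qed.

Lemma mx_compositional_blockdiag J Q : Q \in unitmx -> slot_blockdiag Q ->
  mx_compositional J -> mx_compositional (J *m Q).
Proof. by move=> uQ bQ cJ k j kj; rewrite !supp_rows_blockdiag //; apply: cJ. Qed.

Lemma mx_irreducible_blockdiag J Q : Q \in unitmx -> slot_blockdiag Q ->
  mx_irreducible J -> mx_irreducible (J *m Q).
Proof.
move=> uQ bQ iJ k S1 S2 S10 S20 S12; rewrite !supp_rows_blockdiag // => S12k.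
by rewrite !rows_of_mul !mxrankMfree ?row_free_unit //; apply: iJ.
Qed.

Lemma mx_compositionalP J : mx_compositional J <-> mx_atmost0 J.
Proof.
split=> [cJ k j kj i j' ik j'j l | aJ k j kj].
  apply/eqP; rewrite mulf_eq0; apply/negPn/negP => /norP[nzi nzj].
  suff : l \in finset.set0 by rewrite inE.
  rewrite -(cJ k j kj) inE !inE.
  by apply/andP; split; apply/existsP; [exists i; rewrite ik | exists j'; rewrite j'j].
apply/setP => l; rewrite !inE; apply/negP.
move=> /andP[/existsP[i /andP[ik nzi]] /existsP[j' /andP[j'j nzj]]].
by move: (aJ k j kj i j' ik j'j l); apply/eqP; rewrite mulf_neq0.
Qed.

Lemma mx_compositional_supp J k l j : mx_compositional J ->
  l \in supp_rows J (slot B k) -> j \notin slot B k -> J l j = 0.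
Proof.
move=> cJ lk jk; apply/eqP/negPn/negP => nz.
have kj : k != B j by apply: contraNneq jk => ->; rewrite in_slot.
suff : l \in finset.set0 by rewrite inE.
rewrite -(cJ k (B j) kj) inE lk inE.
by apply/existsP; exists j; rewrite in_slot eqxx.
Qed.

Lemma rows_of_slot_support J k T : mx_compositional J ->
  T \subset supp_rows J (slot B k) ->
  rows_of J T *m coordmx F (slot B k) = rows_of J T.
Proof.
move=> cJ TI; apply/coord_support => t j jk; rewrite mxE.
by apply: mx_compositional_supp jk => //; apply: (fintype.subsetP TI); exact: enum_valP.
Qed.

Lemma rank_rows_of_disjoint J (S1 S2 : {set 'I_dx}) A C :
  rows_of J S1 *m coordmx F A = rows_of J S1 ->
  rows_of J S2 *m coordmx F C = rows_of J S2 -> A :&: C = finset.set0 ->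
  (\rank (rows_of J S1) + \rank (rows_of J S2) <= \rank (rows_of J (S1 :|: S2)))%N.
Proof.
move=> S1A S2C disjAC; rewrite -mxrank_sum_cap (capmx_coord_support S1A S2C disjAC).
rewrite mxrank0 addn0; apply: mxrankS.
by rewrite addsmx_sub !rows_of_subset ?finset.subsetUl ?finset.subsetUr.
Qed.

Lemma supp_rows_support J k A C : mx_compositional J -> A :|: C = slot B k ->
  (forall i j l, i \in A -> j \in C -> J l i * J l j = 0) ->
  rows_of J (supp_rows J A) *m coordmx F A = rows_of J (supp_rows J A).
Proof.
move=> cJ ACk noint; apply/coord_support => t j jA; rewrite mxE.
have := enum_valP t; set l := enum_val t; rewrite inE => /existsP[i /andP[iA nzi]].
case: (boolP (j \in C)) => jC.
  by move: (noint i j l iA jC) => /eqP; rewrite mulf_eq0 (negbTE nzi) => /eqP.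
apply: (mx_compositional_supp (k := k) cJ); last by rewrite -ACk inE negb_or jA.
rewrite -ACk supp_rowsU inE; apply/orP; left.
by rewrite inE; apply/existsP; exists i; rewrite iA.
Qed.

Lemma mx_interacting_of_irreducible J : \rank J = dz ->
  mx_compositional J -> mx_irreducible J -> mx_interacting J.
Proof.
move=> rk cJ iJ k A C A0 C0 ACk.
case: (pselect (exists i j l, [/\ i \in A, j \in C & J l i * J l j != 0])) => // none.
exfalso.
have noint i j l : i \in A -> j \in C -> J l i * J l j = 0.
  by move=> iA jC; apply/eqP/negPn/negP => nz; apply: none; exists i, j, l.
have disjAC : A :&: C = finset.set0.
  apply/setP => i; rewrite !inE; apply/negP => /andP[iA iC].
  have [l nz] := full_rank_col_neq0 i rk.
  by move: (noint i i l iA iC) => /eqP; rewrite mulf_eq0 orbb (negbTE nz).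
have supp_gt0 (X : {set 'I_dz}) : (0 < #|X|)%N -> (0 < #|supp_rows J X|)%N.
  move=> /card_gt0P[i iX]; have [l nz] := full_rank_col_neq0 i rk.
  by apply/card_gt0P; exists l; rewrite inE; apply/existsP; exists i; rewrite iX.
have disjS : supp_rows J A :&: supp_rows J C = finset.set0.
  apply/setP => l; rewrite !inE; apply/negP.
  move=> /andP[/existsP[i /andP[iA nzi]] /existsP[j /andP[jC nzj]]].
  by move: (noint i j l iA jC) => /eqP; rewrite mulf_eq0 (negbTE nzi) (negbTE nzj).
have S12 : supp_rows J A :|: supp_rows J C = supp_rows J (slot B k).
  by rewrite -supp_rowsU ACk.
have S1A := supp_rows_support cJ ACk noint.
have S2C : rows_of J (supp_rows J C) *m coordmx F C = rows_of J (supp_rows J C).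
  apply: (supp_rows_support cJ (etrans (finset.setUC C A) ACk)).
  by move=> i j l iC jA; rewrite mulrC noint.
have := iJ k _ _ (supp_gt0 _ A0) (supp_gt0 _ C0) disjS S12.
by rewrite -S12 ltnNge (rank_rows_of_disjoint S1A S2C disjAC).
Qed.

Lemma slot_change_of_basis k r1 r2 (Y1 : 'M[F]_(r1, dz)) (Y2 : 'M[F]_(r2, dz)) :
  (0 < r1)%N -> (0 < r2)%N -> (r1 + r2 <= #|slot B k|)%N ->
  col_mx Y1 Y2 *m coordmx F (slot B k) = col_mx Y1 Y2 ->
  exists P A C, [/\ slot_blockdiag P,
    coordmx F (~: slot B k) *m P = coordmx F (~: slot B k),
    (Y1 <= coordmx F A *m P)%MS & (Y2 <= coordmx F C *m P)%MS]
  /\ [/\ (0 < #|A|)%N, (0 < #|C|)%N, A :&: C = finset.set0 & A :|: C = slot B k].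
Proof.
move=> r1p r2p le_r_slot Yk; set Y := col_mx Y1 Y2.
pose sigma (v : 'I_(r1 + r2)) : 'I_dz := enum_val (widen_ord le_r_slot v).
have sigma_inj : injective sigma.
  by move=> u v; rewrite /sigma => /enum_val_inj [] /val_inj.
have sigma_slot v : sigma v \in slot B k by exact: enum_valP.
(* In slot k, row [sigma v] of P is row v of Y and the other rows vanish;
   outside slot k, P is the identity. *)
pose P : 'M[F]_dz := \matrix_(a, j) if a \in slot B k then
  (if [pick v | sigma v == a] is Some v then Y v j else 0) else (a == j)%:R.
have row_P_sigma v : row (sigma v) P = row v Y.
  apply/rowP => j; rewrite !mxE sigma_slot.
  by case: pickP => [v' /eqP/sigma_inj -> |/(_ v)]; rewrite ?eqxx // mxE.
pose A := [set sigma (lshift r2 u) | u : 'I_r1].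
pose C := slot B k :\: A.
have Ak : A \subset slot B k by apply/fintype.subsetP => _ /imsetP[u _ ->].
have sigma_rshift v : sigma (rshift r1 v) \in C.
  rewrite finset.in_setD sigma_slot andbT; apply/imsetP => -[u _ /sigma_inj/eqP].
  by rewrite eq_rlshift.
exists P, A, C; split; split.
- move=> i j Bij; rewrite mxE; case: ifP => ik.
    have jk : j \notin slot B k by rewrite !in_slot in ik *; rewrite -(eqP ik) eq_sym.
    by case: pickP => [v _|//]; move/coord_support: Yk; apply.
  by rewrite (_ : (i == j) = false) //; apply: contraNF Bij => /eqP ->.
- apply/row_matrixP => a; rewrite row_coordmx_mul row_coordmx finset.in_setC.
  case: (boolP (a \in slot B k)) => ak /=; first by rewrite !scale0r.
  by rewrite !scale1r; apply/rowP => j; rewrite !mxE (negbTE ak) eq_sym.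
- apply/row_subP => u; rewrite -(rowKu u Y1 Y2) -row_P_sigma.
  rewrite (_ : row _ P = row (sigma (lshift r2 u)) (coordmx F A *m P)) ?row_sub //.
  by rewrite row_coordmx_mul (_ : _ \in A) ?scale1r //; apply/imsetP; exists u.
- apply/row_subP => u; rewrite -(rowKd u Y1 Y2) -row_P_sigma.
  rewrite (_ : row _ P = row (sigma (rshift r1 u)) (coordmx F C *m P)) ?row_sub //.
  by rewrite row_coordmx_mul sigma_rshift scale1r.
- by apply/card_gt0P; exists (sigma (lshift r2 (Ordinal r1p))); apply/imsetP; eexists.
- by apply/card_gt0P; exists (sigma (rshift r1 (Ordinal r2p))).
- by rewrite /C finset.setDE finset.setICA finset.setICr finset.setI0.
- by rewrite /C finset.setDE finset.setUIr finset.setUCr finset.setIT; apply/finset.setUidPr.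
Qed.

Lemma reducible_slot_change_of_basis J k (S1 S2 : {set 'I_dx}) : \rank J = dz ->
  mx_compositional J -> (0 < #|S1|)%N -> (0 < #|S2|)%N ->
  S1 :|: S2 = supp_rows J (slot B k) ->
  (\rank (rows_of J S1) + \rank (rows_of J S2) <=
   \rank (rows_of J (supp_rows J (slot B k))))%N ->
  exists P A C, [/\ P \in unitmx, slot_blockdiag P,
    forall l, l \in S1 -> (row l J <= coordmx F A *m P)%MS,
    forall l, l \in S2 -> (row l J <= coordmx F C *m P)%MS &
    forall l, l \notin S1 :|: S2 -> (row l J <= coordmx F (~: slot B k) *m P)%MS]
  /\ [/\ (0 < #|A|)%N, (0 < #|C|)%N, A :&: C = finset.set0 & A :|: C = slot B k].
Proof.
move=> rk cJ S10 S20 S12 rank_le; rewrite S12.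
set I := supp_rows J (slot B k) in S12 rank_le *.
have S1I : S1 \subset I by rewrite -S12 finset.subsetUl.
have S2I : S2 \subset I by rewrite -S12 finset.subsetUr.
set X1 := rows_of J S1; set X2 := rows_of J S2.
have rank_gt0 (S' : {set 'I_dx}) :
    (0 < #|S'|)%N -> S' \subset I -> (0 < \rank (rows_of J S'))%N.
  move=> /card_gt0P[l lS'] S'I.
  exact: rank_rows_of_gt0 lS' (fintype.subsetP S'I l lS').
have le_slot : (\rank X1 + \rank X2 <= #|slot B k|)%N.
  exact: leq_trans rank_le (mxrank_coord_support (rows_of_slot_support cJ (subxx I))).
have Y1k : row_base X1 *m coordmx F (slot B k) = row_base X1.
  by apply: coord_support_sub (rows_of_slot_support cJ S1I); rewrite eq_row_base.
have Y2k : row_base X2 *m coordmx F (slot B k) = row_base X2.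
  by apply: coord_support_sub (rows_of_slot_support cJ S2I); rewrite eq_row_base.
have Yk : col_mx (row_base X1) (row_base X2) *m coordmx F (slot B k) =
          col_mx (row_base X1) (row_base X2) by rewrite mul_col_mx Y1k Y2k.
have [P [A [C [[Pbd Pout X1P X2P] ACprops]]]] :=
  slot_change_of_basis (rank_gt0 _ S10 S1I) (rank_gt0 _ S20 S2I) le_slot Yk.
have S1A l : l \in S1 -> (row l J <= coordmx F A *m P)%MS.
  move=> lS1; apply: submx_trans (row_rows_of_sub J lS1) (submx_trans _ X1P).
  by rewrite eq_row_base.
have S2C l : l \in S2 -> (row l J <= coordmx F C *m P)%MS.
  move=> lS2; apply: submx_trans (row_rows_of_sub J lS2) (submx_trans _ X2P).
  by rewrite eq_row_base.
have outP l : l \notin I -> (row l J <= coordmx F (~: slot B k) *m P)%MS.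
  move=> lI; rewrite Pout.
  suff <- : row l J *m coordmx F (~: slot B k) = row l J by exact: submxMl.
  apply/coord_support => t j; rewrite finset.in_setC negbK mxE.
  exact: notin_supp_rows.
exists P, A, C; split=> //; split=> //.
rewrite -row_full_unit -sub1mx; apply: submx_trans (_ : (1%:M <= J)%MS) _.
  by rewrite sub1mx /row_full rk.
apply/row_subP => l; case: (boolP (l \in I)) => [|/outP lout]; last first.
  exact: submx_trans lout (submxMl _ _).
rewrite -S12 inE => /orP[/S1A|/S2C] lsub; exact: submx_trans lsub (submxMl _ _).
Qed.

Lemma mx_irreducible_of_interacting J : \rank J = dz -> mx_compositional J ->
  (forall P, P \in unitmx -> slot_blockdiag P -> mx_interacting (J *m invmx P)) ->
  mx_irreducible J.
Proof.
move=> rk cJ interacting k S1 S2 S10 S20 _ S12.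
rewrite ltnNge; apply/negP => rank_le.
have [P [A [C [[uP Pbd S1A S2C outP] [A0 C0 disjAC ACk]]]]] :=
  reducible_slot_change_of_basis rk cJ S10 S20 S12 rank_le.
have [i [j [l [iA jC]]]] := interacting P uP Pbd k A C A0 C0 ACk.
have jA : j \notin A.
  by apply/negP => jA; move: (finset.in_setI j A C); rewrite disjAC inE jA jC.
have iC : i \notin C.
  by apply/negP => iC; move: (finset.in_setI i A C); rewrite disjAC inE iA iC.
have iS : i \notin ~: slot B k by rewrite finset.in_setC negbK -ACk inE iA.
apply/negP; rewrite negbK mulf_eq0.
case: (boolP (l \in S1)) => [/S1A lA|nS1].
  by rewrite (mulmx_invmx_coord_eq0 uP lA jA) eqxx orbT.
case: (boolP (l \in S2)) => [/S2C lC|nS2].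
  by rewrite (mulmx_invmx_coord_eq0 uP lC iC) eqxx.
have lS : l \notin S1 :|: S2 by rewrite inE negb_or nS1.
by rewrite (mulmx_invmx_coord_eq0 uP (outP l lS) iS) eqxx.
Qed.

End SlotMatrices.

Section Jacobian.
Variables (R : realType) (dz dx K : nat) (B : 'I_dz -> 'I_K).
Implicit Types (f g : 'rV[R]_dz -> 'rV[R]_dx) (z w : 'rV[R]_dz).

Lemma jacE f z : differentiable f z -> jac f z = (jacobian f z)^T.
Proof.
move=> df; apply/matrixP => l i; rewrite [LHS]mxE [RHS]mxE /pder.
by rewrite deriveEjacobian // /ebasis -rowE [LHS]mxE.
Qed.

Lemma derive_mulmx f (L : 'M[R]_dz) v w :
  'D_v (fun u => f (u *m L)) w = 'D_(v *m L) f (w *m L).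
Proof.
by rewrite /derive; do 2 f_equal; apply: funext => h /=; rewrite mulmxDl scalemxAl.
Qed.

Lemma jac_mulmx f (L : 'M[R]_dz) w : differentiable f (w *m L) ->
  jac (fun u => f (u *m L)) w = jac f (w *m L) *m L^T.
Proof.
move=> df; rewrite (jacE df) -trmx_mul; apply/matrixP => l i.
rewrite [LHS]mxE [RHS]mxE /pder derive_mulmx deriveEjacobian //.
by rewrite -mulmxA /ebasis -rowE [LHS]mxE.
Qed.

Lemma pder_jac f i l z : pder f i l z = jac f z l i.
Proof. by rewrite mxE. Qed.

Lemma Iset_jac f S z : Iset f S z = supp_rows (jac f z) S.
Proof. by apply/setP => l; rewrite !inE; apply: eq_existsb => i; rewrite mxE. Qed.

Lemma jacT_jac f T z : jacT f T z = rows_of (jac f z) T.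
Proof. by apply/matrixP => t i; rewrite !mxE. Qed.

Lemma compositional_jac f :
  compositional B f <-> forall z, mx_compositional B (jac f z).
Proof. by split=> cf z k j kj; move: (cf z k j kj); rewrite !Iset_jac. Qed.

Lemma irreducible_jac f :
  irreducible B f <-> forall z, mx_irreducible B (jac f z).
Proof.
split=> irf z k S1 S2 S10 S20 S12; move: (irf z k S1 S2 S10 S20 S12);
  by rewrite !Iset_jac !jacT_jac.
Qed.

Lemma atmost0_jac f :
  atmost0_across_slots B f <-> forall z, mx_atmost0 B (jac f z).
Proof.
split=> af.
  by move=> z k j kj i j' ik j'j l; rewrite -!pder_jac; exact: (af k j kj z i j' ik j'j l).
by move=> k j kj z i j' ik j'j l; rewrite !pder_jac; exact: (af z k j kj i j' ik j'j l).
Qed.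

Lemma interaction_asymmetry0_jac g : interaction_asymmetry0 B g <->
  (forall z, mx_atmost0 B (jac g z)) /\ forall z, mx_interacting B (jac g z).
Proof.
rewrite -atmost0_jac; split=> -[ag ig]; split=> // z k A C A0 C0 ACk;
  have [i [j [l]]] := ig z k A C A0 C0 ACk; exists i, j, l;
  by rewrite ?pder_jac // -?pder_jac.
Qed.

Lemma equivalent_generator_jac f fbar : (forall z, differentiable f z) ->
  equivalent_generator B f fbar ->
  exists2 Q, slot_blockdiag_inv B Q & forall w, jac fbar w = jac f (w *m Q^T) *m Q.
Proof.
move=> df [M [[uM bM] fbarE]]; exists (invmx M).
  by split; [rewrite unitmx_inv | exact: slot_blockdiag_invmx].
move=> w; have -> : fbar = (fun u => f (u *m (invmx M)^T)).
  by apply: funext => u; rewrite -fbarE trmx_inv mulmxKV // unitmx_tr.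
by rewrite jac_mulmx // trmxK.
Qed.

Lemma equivalent_generator_mulmx f P : slot_blockdiag_inv B P ->
  equivalent_generator B f (fun u => f (u *m (invmx P)^T)).
Proof. by move=> [uP bP]; exists P; split=> // z; rewrite trmx_inv mulmxK // unitmx_tr. Qed.

End Jacobian.

Theorem mainTheorem9 (R : realType) (dz dx K : nat) (B : 'I_dz -> 'I_K)
  (f : 'rV[R]_dz -> 'rV[R]_dx) :
  slots_nonempty B ->
  C1_diffeo_onto_image f ->
  (compositional B f /\ irreducible B f) <->
  (atmost0_across_slots B f /\
   forall fbar, equivalent_generator B f fbar -> interaction_asymmetry0 B fbar).
Proof.
move=> _ [df _ rk _]; split.
- case=> /compositional_jac cf /irreducible_jac irf; split.
    by apply/atmost0_jac => z; apply/mx_compositionalP.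
  move=> fbar /(equivalent_generator_jac df) [Q [uQ bQ] jacE].
  apply/interaction_asymmetry0_jac; split=> w; rewrite jacE.
    by apply/mx_compositionalP; apply: mx_compositional_blockdiag.
  apply: mx_interacting_of_irreducible.
  + by rewrite mxrankMfree ?row_free_unit.
  + exact: mx_compositional_blockdiag.
  + exact: mx_irreducible_blockdiag.
- case=> /atmost0_jac af IA.
  have cf z : mx_compositional B (jac f z) by apply/mx_compositionalP.
  split; first exact/compositional_jac.
  apply/irreducible_jac => z; apply: mx_irreducible_of_interacting => // P uP bP.
  have /interaction_asymmetry0_jac[_ /(_ (z *m P^T))] :=
    IA _ (equivalent_generator_mulmx f (conj uP bP)).
  by rewrite jac_mulmx // trmxK trmx_inv mulmxK ?unitmx_tr.
Qed.
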